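(* Let $\rho$ be the higher-order GSOS law induced by a relatively flat higher-order GSOS law $(\rho^j)_{j\in J}$, and let $z\colon Z\to B(Z,Z)$ be a locally final coalgebra. Let $a_\rho\colon\Sigma Z\to Z$ be the algebra structure constructed in the context. Then the $\Sigma$-algebra $(Z,a_\rho)$ is adequate: with $\llbracket-\rrbracket\colon\mu\Sigma\to Z$ the unique $\Sigma$-algebra morphism and $\mathsf{beh}\colon\mu\Sigma\to\nu B(\mu\Sigma,-)$ the unique $B(\mu\Sigma,-)$-coalgebra morphism from $(\mu\Sigma,\gamma)$, there is a morphism $k\colon Z\to\nu B(\mu\Sigma,-)$ with $k\cdot\llbracket-\rrbracket=\mathsf{beh}$.
   Context: Let $\mathcal{C}$ be a category with binary products and coproducts (pairing $\langle f,g\rangle$, copairing $[f,g]$, injections $\mathsf{inl},\mathsf{inr}$, codiagonal $\nabla$). Let $\Sigma\colon\mathcal{C}\to\mathcal{C}$ have an initial algebra $(\mu\Sigma,\iota)$ and free algebras $(\Sigma^\star X,\iota_X)$ with units $\eta_X$; for an algebra $(A,a)$, $\hat a\colon\Sigma^\star A\to A$ is the unique algebra morphism with $\hat a\cdot\eta_A=\mathrm{id}$. Let $B\colon\mathcal{C}^{op}\times\mathcal{C}\to\mathcal{C}$ be a bifunctor such that every $B(X,-)$ has a final coalgebra $\nu B(X,-)$. A higher-order GSOS law is a family $\rho_{X,Y}\colon\Sigma(X\times B(X,Y))\to B(X,\Sigma^\star(X+Y))$ dinatural in $X$, natural in $Y$; its operational model is the unique $\gamma\colon\mu\Sigma\to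 B(\mu\Sigma,\mu\Sigma)$ with $\gamma\cdot\iota=B(\mathrm{id},\hat\iota\cdot\Sigma^\star\nabla)\cdot\rho_{\mu\Sigma,\mu\Sigma}\cdot\Sigma\langle\mathrm{id},\gamma\rangle$. A higher-order coalgebra $z\colon Z\to B(Z,Z)$ is locally final if it is a final coalgebra for $B(Z,-)$. Relative flatness: $(J,<)$ well-founded, $\Sigma=\coprod_{j\in J}\Sigma_j$ with $\Sigma_j$ and $\Sigma_{<j}=\coprod_{i<j}\Sigma_i$ having free algebras; a relatively flat law is a family $\rho^j_{X,Y}\colon\Sigma_j(X\times B(X,Y))\to B(X,\Sigma^\star_{<j}(X+Y)+\Sigma_j\Sigma^\star_{<j}(X+Y))$ dinatural in $X$, natural in $Y$, inducing the law $\rho_{X,Y}=[B(\mathrm{id},e_{j,X+Y})\cdot\rho^j_{X,Y}]_j$ with $e_{j,W}=[\mathsf{inj}^\star_{<j},\iota_W\cdot\mathsf{inj}_j\cdot\Sigma_j\mathsf{inj}^\star_{<j}]$ ($\mathsf{inj}_j,\mathsf{inj}_{<j}$ coproduct injections into $\Sigma$, $\mathsf{inj}^\star_{<j}\colon\Sigma^\star_{<j}\to\Sigma^\star$ induced). Construction of $a_\rho$: by well-founded recursion on $j$ define $a^j_\rho\colon Z+\Sigma_jZ\to Z$: given $a^i_\rho$ for $i<j$, put $a^{<j}_\rho=[a^i_\rho\cdot\mathsf{inr}]_{i<j}\colon\Sigma_{<j}Z\to Z$, and let $a^j_\rho$ be the unique $B(Z,-)$-coalgebra morphism into $(Z,z)$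 from the coalgebra $Z+\Sigma_jZ\to B(Z,Z+\Sigma_jZ)$ given by the composite $\nabla\cdot(B(\mathrm{id},\mathsf{inl})+\mathrm{id})\cdot(\mathrm{id}+B(\mathrm{id},\widehat{a^{<j}_\rho}+\Sigma_j\widehat{a^{<j}_\rho}))\cdot(\mathrm{id}+\rho^j_{Z,Z}\text{ composed with }\Sigma_j(\mathrm{id}\times B(\mathrm{id},\nabla)))\cdot(z+\Sigma_j\langle\mathrm{id},z\rangle)$ (here $\rho^j$ is used at $X=Y=Z$ followed by $\nabla\colon Z+Z\to Z$ inside the free monads). Then $a_\rho=[a^j_\rho\cdot\mathsf{inr}]_{j\in J}\colon\Sigma Z\to Z$; $(Z,a_\rho,z)$ is a $\rho$-bialgebra. *)

From Stdlib Require Import Relations Wellfounded.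

Record Category := {
  ob :> Type;
  hom : ob -> ob -> Type;
  idm : forall A, hom A A;
  comp : forall A B D, hom B D -> hom A B -> hom A D;
  comp_idl : forall A B (f : hom A B), comp A B B (idm B) f = f;
  comp_idr : forall A B (f : hom A B), comp A A B f (idm A) = f;
  comp_assoc : forall A B D E (h : hom D E) (g : hom B D) (f : hom A B),
      comp A D E h (comp A B D g f) = comp A B E (comp B D E h g) f }.
Arguments hom {c} _ _.
Arguments idm {c} A.
Arguments comp {c A B D} _ _.
Notation "g ∘ f" := (comp g f) (at level 40, left associativity).

Record BinProducts (C : Category) := {
  bprod : C -> C -> C;
  pi1 : forall A B, hom (bprod A B) A;
  pi2 : forall A B, hom (bprod A B) B;
  pairing : forall X A B, hom X A -> hom X B -> hom X (bprod A B);
  pairing_pi1 : forall X A B (f : hom X A) (g : hom X B), pi1 A B ∘ pairing X A B f g = f;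
  pairing_pi2 : forall X A B (f : hom X A) (g : hom X B), pi2 A B ∘ pairing X A B f g = g;
  pairing_unique : forall X A B (f : hom X A) (g : hom X B) (h : hom X (bprod A B)),
      pi1 A B ∘ h = f -> pi2 A B ∘ h = g -> h = pairing X A B f g }.
Arguments bprod {C} _ _ _.
Arguments pi1 {C} _ {A B}.
Arguments pi2 {C} _ {A B}.
Arguments pairing {C} _ {X A B} _ _.

Record BinCoproducts (C : Category) := {
  bcoprod : C -> C -> C;
  cinl : forall A B, hom A (bcoprod A B);
  cinr : forall A B, hom B (bcoprod A B);
  copair : forall A B X, hom A X -> hom B X -> hom (bcoprod A B) X;
  copair_inl : forall A B X (f : hom A X) (g : hom B X), copair A B X f g ∘ cinl A B = f;
  copair_inr : forall A B X (f : hom A X) (g : hom B X), copair A B X f g ∘ cinr A B = g;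
  copair_unique : forall A B X (f : hom A X) (g : hom B X) (h : hom (bcoprod A B) X),
      h ∘ cinl A B = f -> h ∘ cinr A B = g -> h = copair A B X f g }.
Arguments bcoprod {C} _ _ _.
Arguments cinl {C} _ {A B}.
Arguments cinr {C} _ {A B}.
Arguments copair {C} _ {A B X} _ _.

Definition prodmap {C : Category} (P : BinProducts C) {A A' B B'}
  (f : hom A A') (g : hom B B') : hom (bprod P A B) (bprod P A' B') :=
  pairing P (f ∘ pi1 P) (g ∘ pi2 P).
Definition summap {C : Category} (Q : BinCoproducts C) {A A' B B'}
  (f : hom A A') (g : hom B B') : hom (bcoprod Q A B) (bcoprod Q A' B') :=
  copair Q (cinl Q ∘ f) (cinr Q ∘ g).
Definition codiag {C : Category} (Q : BinCoproducts C) (A : C) : hom (bcoprod Q A A) A :=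
  copair Q (idm A) (idm A).

Definition IsCoproduct {C : Category} {I : Type} (F : I -> C) (S : C)
  (inj : forall i, hom (F i) S) : Prop :=
  forall X (f : forall i, hom (F i) X),
    exists h : hom S X, (forall i, h ∘ inj i = f i) /\
      (forall h' : hom S X, (forall i, h' ∘ inj i = f i) -> h' = h).

Record Functor (C : Category) := {
  fob : C -> C;
  fmap : forall A B, hom A B -> hom (fob A) (fob B);
  fmap_id : forall A, fmap A A (idm A) = idm (fob A);
  fmap_comp : forall A B D (g : hom B D) (f : hom A B),
      fmap A D (g ∘ f) = fmap B D g ∘ fmap A B f }.
Arguments fob {C} _ _.
Arguments fmap {C} _ {A B} _.

Definition IsNatural {C : Category} (F G : Functor C) (t : forall X, hom (fob F X) (fob G X)) : Prop :=
  forall X Y (f : hom X Y), fmap G f ∘ t X = t Y ∘ fmap F f.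

Definition IsFunctorCoproduct {C : Category} {I : Type} (Fs : I -> Functor C) (S : Functor C)
  (inj : forall i X, hom (fob (Fs i) X) (fob S X)) : Prop :=
  (forall i, IsNatural (Fs i) S (inj i)) /\
  (forall X, IsCoproduct (fun i => fob (Fs i) X) (fob S X) (fun i => inj i X)).

Record Bifunctor (C : Category) := {
  bob : C -> C -> C;
  bmap : forall X X' Y Y', hom X' X -> hom Y Y' -> hom (bob X Y) (bob X' Y');
  bmap_id : forall X Y, bmap X X Y Y (idm X) (idm Y) = idm (bob X Y);
  bmap_comp : forall X X' X'' Y Y' Y'' (f : hom X' X) (f' : hom X'' X')
      (g : hom Y Y') (g' : hom Y' Y''),
      bmap X X'' Y Y'' (f ∘ f') (g' ∘ g) = bmap X' X'' Y' Y'' f' g' ∘ bmap X X' Y Y' f g }.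
Arguments bob {C} _ _ _.
Arguments bmap {C} _ {X X' Y Y'} _ _.

Definition IsAlgMor {C : Category} (F : Functor C) {A A' : C}
  (a : hom (fob F A) A) (a' : hom (fob F A') A') (h : hom A A') : Prop :=
  h ∘ a = a' ∘ fmap F h.

Definition IsCoalgMor {C : Category} (B : Bifunctor C) (X : C) {Y Y' : C}
  (c : hom Y (bob B X Y)) (c' : hom Y' (bob B X Y')) (h : hom Y Y') : Prop :=
  c' ∘ h = bmap B (idm X) h ∘ c.

Record FreeAlgebras {C : Category} (F : Functor C) := {
  fa_obj : C -> C;
  fa_str : forall X, hom (fob F (fa_obj X)) (fa_obj X);
  fa_eta : forall X, hom X (fa_obj X);
  fa_ext : forall X A, hom (fob F A) A -> hom X A -> hom (fa_obj X) A;
  fa_ext_mor : forall X A (a : hom (fob F A) A) (f : hom X A),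
      IsAlgMor F (fa_str X) a (fa_ext X A a f);
  fa_ext_eta : forall X A (a : hom (fob F A) A) (f : hom X A),
      fa_ext X A a f ∘ fa_eta X = f;
  fa_ext_unique : forall X A (a : hom (fob F A) A) (f : hom X A) (h : hom (fa_obj X) A),
      IsAlgMor F (fa_str X) a h -> h ∘ fa_eta X = f -> h = fa_ext X A a f }.
Arguments fa_obj {C F} _ _.
Arguments fa_str {C F} _ _.
Arguments fa_eta {C F} _ _.
Arguments fa_ext {C F} _ {X A} _ _.

Definition fstar {C : Category} {F : Functor C} (FA : FreeAlgebras F) {X Y : C}
  (f : hom X Y) : hom (fa_obj FA X) (fa_obj FA Y) :=
  fa_ext FA (fa_str FA Y) (fa_eta FA Y ∘ f).
Definition hat {C : Category} {F : Functor C} (FA : FreeAlgebras F) {A : C}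
  (a : hom (fob F A) A) : hom (fa_obj FA A) A :=
  fa_ext FA a (idm A).

Record InitialAlgebra {C : Category} (F : Functor C) := {
  ia_obj : C;
  ia_str : hom (fob F ia_obj) ia_obj;
  ia_fold : forall A, hom (fob F A) A -> hom ia_obj A;
  ia_fold_mor : forall A (a : hom (fob F A) A), IsAlgMor F ia_str a (ia_fold A a);
  ia_fold_unique : forall A (a : hom (fob F A) A) (h : hom ia_obj A),
      IsAlgMor F ia_str a h -> h = ia_fold A a }.
Arguments ia_obj {C F} _.
Arguments ia_str {C F} _.
Arguments ia_fold {C F} _ {A} _.

Record FinalCoalgebra {C : Category} (B : Bifunctor C) (X : C) := {
  fc_obj : C;
  fc_str : hom fc_obj (bob B X fc_obj);
  fc_unfold : forall Y, hom Y (bob B X Y) -> hom Y fc_obj;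
  fc_unfold_mor : forall Y (c : hom Y (bob B X Y)), IsCoalgMor B X c fc_str (fc_unfold Y c);
  fc_unfold_unique : forall Y (c : hom Y (bob B X Y)) (h : hom Y fc_obj),
      IsCoalgMor B X c fc_str h -> h = fc_unfold Y c }.
Arguments fc_obj {C B X} _.
Arguments fc_str {C B X} _.
Arguments fc_unfold {C B X} _ {Y} _.

Definition IsLocallyFinal {C : Category} (B : Bifunctor C) {Z : C} (z : hom Z (bob B Z Z)) : Prop :=
  forall Y (c : hom Y (bob B Z Y)),
    exists h : hom Y Z, IsCoalgMor B Z c z h /\
      (forall h' : hom Y Z, IsCoalgMor B Z c z h' -> h' = h).

Section RelFlat.
Context {C : Category} (P : BinProducts C) (Q : BinCoproducts C) (B : Bifunctor C)
  {J : Type} (lt : J -> J -> Prop)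
  (Sig : J -> Functor C) (Sigma : Functor C) (Siglt : J -> Functor C)
  (FS : FreeAlgebras Sigma) (FSlt : forall j, FreeAlgebras (Siglt j)).

Definition Sj (j : J) (W : C) : C :=
  bcoprod Q (fa_obj (FSlt j) W) (fob (Sig j) (fa_obj (FSlt j) W)).
Definition Sj_map (j : J) {W W' : C} (g : hom W W') : hom (Sj j W) (Sj j W') :=
  summap Q (fstar (FSlt j) g) (fmap (Sig j) (fstar (FSlt j) g)).

Definition RhojType : Type :=
  forall j X Y, hom (fob (Sig j) (bprod P X (bob B X Y))) (bob B X (Sj j (bcoprod Q X Y))).

(* dinatural in X, natural in Y *)
Definition IsRelFlatLaw (rhoj : RhojType) : Prop :=
  (forall j (X X' Y : C) (f : hom X X'),
     bmap B (idm X) (Sj_map j (summap Q f (idm Y))) ∘ rhoj j X Y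
       ∘ fmap (Sig j) (prodmap P (idm X) (bmap B f (idm Y)))
     = bmap B f (idm (Sj j (bcoprod Q X' Y))) ∘ rhoj j X' Y
       ∘ fmap (Sig j) (prodmap P f (idm (bob B X' Y)))) /\
  (forall j (X Y Y' : C) (g : hom Y Y'),
     bmap B (idm X) (Sj_map j (summap Q (idm X) g)) ∘ rhoj j X Y
     = rhoj j X Y' ∘ fmap (Sig j) (prodmap P (idm X) (bmap B (idm X) g))).

Variable injlt : forall j X, hom (fob (Siglt j) X) (fob Sigma X).
Variable inj : forall j X, hom (fob (Sig j) X) (fob Sigma X).

Definition injstar (j : J) (W : C) : hom (fa_obj (FSlt j) W) (fa_obj FS W) :=
  fa_ext (FSlt j) (fa_str FS W ∘ injlt j (fa_obj FS W)) (fa_eta FS W).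

Definition e_map (j : J) (W : C) : hom (Sj j W) (fa_obj FS W) :=
  copair Q (injstar j W) (fa_str FS W ∘ inj j (fa_obj FS W) ∘ fmap (Sig j) (injstar j W)).

Definition IsInducedLaw (rhoj : RhojType)
  (rho : forall X Y, hom (fob Sigma (bprod P X (bob B X Y))) (bob B X (fa_obj FS (bcoprod Q X Y))))
  : Prop :=
  forall j X Y, rho X Y ∘ inj j (bprod P X (bob B X Y))
                = bmap B (idm X) (e_map j (bcoprod Q X Y)) ∘ rhoj j X Y.

Definition IsOperationalModel (IA : InitialAlgebra Sigma)
  (rho : forall X Y, hom (fob Sigma (bprod P X (bob B X Y))) (bob B X (fa_obj FS (bcoprod Q X Y))))
  (gamma : hom (ia_obj IA) (bob B (ia_obj IA) (ia_obj IA))) : Prop :=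
  gamma ∘ ia_str IA
  = bmap B (idm (ia_obj IA)) (hat FS (ia_str IA) ∘ fstar FS (codiag Q (ia_obj IA)))
      ∘ rho (ia_obj IA) (ia_obj IA)
      ∘ fmap Sigma (pairing P (idm (ia_obj IA)) gamma).

(* The coalgebra Z + Sigma_j Z -> B(Z, Z + Sigma_j Z) used to define a^j_rho,
   given a^{<j}_rho = alt : Sigma_{<j} Z -> Z. *)
Definition aj_coalg (rhoj : RhojType) {Z : C} (z : hom Z (bob B Z Z)) (j : J)
  (alt : hom (fob (Siglt j) Z) Z)
  : hom (bcoprod Q Z (fob (Sig j) Z)) (bob B Z (bcoprod Q Z (fob (Sig j) Z))) :=
  codiag Q _
  ∘ summap Q (bmap B (idm Z) (cinl Q)) (idm _)
  ∘ summap Q (idm _) (bmap B (idm Z) (summap Q (hat (FSlt j) alt) (fmap (Sig j) (hat (FSlt j) alt))))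
  ∘ summap Q (idm _) (bmap B (idm Z) (Sj_map j (codiag Q Z)) ∘ rhoj j Z Z)
  ∘ summap Q z (fmap (Sig j) (pairing P (idm Z) z)).

End RelFlat.

(* A relatively flat law induces a higher-order GSOS law ρ (natural in Y,
   dinatural in X), and (Z, a_ρ, z) is a ρ-bialgebra: on the summand Σ_j this is
   the coalgebra-morphism property of a^j_ρ, using a^j_ρ ∘ inl = id (by local
   finality) and â_ρ ∘ inj*_{<j} = (a^{<j}_ρ)^. For any bialgebra, with
   h = [[-]], both B(id, h) ∘ γ and B(h, id) ∘ z ∘ h solve the same
   primitive-recursive equation on μΣ, hence agree; so k, the unfold of the
   B(μΣ,-)-coalgebra B(h, id) ∘ z, satisfies k ∘ h = beh by finality. *)


Lemma comp_eq_r {C : Category} {A B D : C} (f g : hom B D) (k : hom A B) :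
  f = g -> f ∘ k = g ∘ k.
Proof. intros ->; reflexivity. Qed.

Ltac assoc_norm :=
  repeat rewrite <- comp_assoc; repeat rewrite comp_idl; repeat rewrite comp_idr.
Ltac assoc_norm_in H := repeat rewrite <- comp_assoc in H.
Ltac instantiate_all H :=
  repeat match type of H with
    | forall _ : _, _ => let H' := fresh in epose proof (H _) as H'; clear H; rename H' into H
    end.
Ltac rewrite_prefix H :=
  first [ rewrite H
        | let H' := fresh in epose proof (comp_eq_r _ _ _ H) as H'; assoc_norm_in H';
          rewrite H'; clear H' ];
  clear H; assoc_norm.

(* [rw E] rewrites with an equation between composites modulo associativity
   ([rwb E] right to left): everything is right-associated, and if [E : l = r]
   does not occur verbatim it is used as [l ∘ k = r ∘ k], so that [l] also
   matches a prefix of a longer composite. *)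
Ltac rw_tac E :=
  assoc_norm; let H := fresh in
  pose proof E as H; instantiate_all H; assoc_norm_in H; rewrite_prefix H.
Ltac rwb_tac E :=
  assoc_norm; let H := fresh in
  pose proof E as H; instantiate_all H; assoc_norm_in H; symmetry in H; rewrite_prefix H.
Tactic Notation "rw" open_constr(E) := rw_tac E.
Tactic Notation "rwb" open_constr(E) := rwb_tac E.

Section ProductsCoproducts.
Context {C : Category} (P : BinProducts C) (Q : BinCoproducts C).

Lemma copair_ext {A B X : C} (h h' : hom (bcoprod Q A B) X) :
  h ∘ cinl Q = h' ∘ cinl Q -> h ∘ cinr Q = h' ∘ cinr Q -> h = h'.
Proof.
  intros El Er.
  rewrite (copair_unique _ Q _ _ _ _ _ h eq_refl eq_refl).
  rewrite (copair_unique _ Q _ _ _ _ _ h' (eq_sym El) (eq_sym Er)).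
  reflexivity.
Qed.

Lemma summap_inl {A A' B B' : C} (f : hom A A') (g : hom B B') :
  summap Q f g ∘ cinl Q = cinl Q ∘ f.
Proof. apply copair_inl. Qed.

Lemma summap_inr {A A' B B' : C} (f : hom A A') (g : hom B B') :
  summap Q f g ∘ cinr Q = cinr Q ∘ g.
Proof. apply copair_inr. Qed.

Lemma codiag_inl (A : C) : codiag Q A ∘ cinl Q = idm A.
Proof. apply copair_inl. Qed.

Lemma codiag_inr (A : C) : codiag Q A ∘ cinr Q = idm A.
Proof. apply copair_inr. Qed.

Lemma pairing_ext {X A B : C} (h h' : hom X (bprod P A B)) :
  pi1 P ∘ h = pi1 P ∘ h' -> pi2 P ∘ h = pi2 P ∘ h' -> h = h'.
Proof.
  intros E1 E2.
  rewrite (pairing_unique _ P _ _ _ _ _ h eq_refl eq_refl).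
  rewrite (pairing_unique _ P _ _ _ _ _ h' (eq_sym E1) (eq_sym E2)).
  reflexivity.
Qed.

Lemma pairing_comp {Y X A B : C} (f : hom X A) (g : hom X B) (k : hom Y X) :
  pairing P f g ∘ k = pairing P (f ∘ k) (g ∘ k).
Proof.
  apply pairing_ext.
  - rw pairing_pi1. rw pairing_pi1. reflexivity.
  - rw pairing_pi2. rw pairing_pi2. reflexivity.
Qed.

Lemma prodmap_pairing {X A A' B B' : C} (f : hom A A') (g : hom B B') (u : hom X A) (v : hom X B) :
  prodmap P f g ∘ pairing P u v = pairing P (f ∘ u) (g ∘ v).
Proof. unfold prodmap. rewrite pairing_comp. rw pairing_pi1. rw pairing_pi2. reflexivity. Qed.

End ProductsCoproducts.

Lemma coproduct_ext {C : Category} {I : Type} {F : I -> C} {S : C} {inj : forall i, hom (F i) S}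
  (H : IsCoproduct F S inj) {X : C} (h h' : hom S X) :
  (forall i, h ∘ inj i = h' ∘ inj i) -> h = h'.
Proof.
  intros E. destruct (H X (fun i => h' ∘ inj i)) as [k [_ U]].
  rewrite (U h E), (U h' (fun i => eq_refl)). reflexivity.
Qed.

Section Bifunctors.
Context {C : Category} (B : Bifunctor C).

Lemma bmap_id_comp {X Y Y' Y'' : C} (g : hom Y Y') (g' : hom Y' Y'') :
  bmap B (idm X) (g' ∘ g) = bmap B (idm X) g' ∘ bmap B (idm X) g.
Proof. rewrite <- bmap_comp, comp_idl. reflexivity. Qed.

Lemma bmap_interchange {X X' Y Y' : C} (f : hom X' X) (g : hom Y Y') :
  bmap B f (idm Y') ∘ bmap B (idm X) g = bmap B (idm X') g ∘ bmap B f (idm Y).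
Proof. rewrite <- !bmap_comp, !comp_idl, !comp_idr. reflexivity. Qed.

End Bifunctors.

Section FreeAlgebra.
Context {C : Category} {F : Functor C} (FA : FreeAlgebras F).

Lemma free_alg_mor_ext {X A : C} (a : hom (fob F A) A) (h h' : hom (fa_obj FA X) A) :
  IsAlgMor F (fa_str FA X) a h -> IsAlgMor F (fa_str FA X) a h' ->
  h ∘ fa_eta FA X = h' ∘ fa_eta FA X -> h = h'.
Proof.
  intros Hh Hh' E.
  rewrite (fa_ext_unique _ FA X A a _ h Hh eq_refl).
  rewrite (fa_ext_unique _ FA X A a _ h' Hh' (eq_sym E)).
  reflexivity.
Qed.

Lemma hat_str {A : C} (a : hom (fob F A) A) :
  hat FA a ∘ fa_str FA A = a ∘ fmap F (hat FA a).
Proof. apply fa_ext_mor. Qed.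

Lemma hat_eta {A : C} (a : hom (fob F A) A) : hat FA a ∘ fa_eta FA A = idm A.
Proof. apply fa_ext_eta. Qed.

Lemma fstar_str {X Y : C} (f : hom X Y) :
  fstar FA f ∘ fa_str FA X = fa_str FA Y ∘ fmap F (fstar FA f).
Proof. apply fa_ext_mor. Qed.

Lemma fstar_eta {X Y : C} (f : hom X Y) : fstar FA f ∘ fa_eta FA X = fa_eta FA Y ∘ f.
Proof. apply fa_ext_eta. Qed.

Lemma fstar_comp {X Y W : C} (g : hom Y W) (f : hom X Y) :
  fstar FA (g ∘ f) = fstar FA g ∘ fstar FA f.
Proof.
  apply (free_alg_mor_ext (fa_str FA W)); unfold IsAlgMor.
  - apply fstar_str.
  - rw fstar_str. rw fstar_str. rewrite fmap_comp. assoc_norm. reflexivity.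
  - rw fstar_eta. rw fstar_eta. rw fstar_eta. reflexivity.
Qed.

Lemma hat_natural {A A' : C} (a : hom (fob F A) A) (a' : hom (fob F A') A') (h : hom A A') :
  IsAlgMor F a a' h -> h ∘ hat FA a = hat FA a' ∘ fstar FA h.
Proof.
  unfold IsAlgMor; intro Hh. apply (free_alg_mor_ext a'); unfold IsAlgMor.
  - rw hat_str. rw Hh. rewrite fmap_comp. assoc_norm. reflexivity.
  - rw fstar_str. rw hat_str. rewrite fmap_comp. assoc_norm. reflexivity.
  - rw hat_eta. rw fstar_eta. rw hat_eta. reflexivity.
Qed.

End FreeAlgebra.

(* [⟨id, f⟩] is the fold of the algebra [⟨ι ∘ F π₁, d⟩] whenever [f] solves the recursion. *)
Lemma initial_primrec_unique {C : Category} (P : BinProducts C) {F : Functor C}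
  (IA : InitialAlgebra F) {A : C} (d : hom (fob F (bprod P (ia_obj IA) A)) A)
  (f f' : hom (ia_obj IA) A) :
  f ∘ ia_str IA = d ∘ fmap F (pairing P (idm _) f) ->
  f' ∘ ia_str IA = d ∘ fmap F (pairing P (idm _) f') -> f = f'.
Proof.
  set (s := pairing P (ia_str IA ∘ fmap F (pi1 P)) d).
  assert (pairing_fold : forall g, g ∘ ia_str IA = d ∘ fmap F (pairing P (idm _) g) ->
            pairing P (idm _) g = ia_fold IA s).
  { intros g Hg. apply ia_fold_unique. unfold IsAlgMor, s. apply pairing_ext.
    - rw pairing_pi1. rw pairing_pi1. rwb fmap_comp. rw pairing_pi1.
      rewrite fmap_id. assoc_norm. reflexivity.
    - rw pairing_pi2. rw pairing_pi2. assoc_norm_in Hg. exact Hg. }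
  intros Hf Hf'.
  pose proof (f_equal (fun t => pi2 P ∘ t)
                (eq_trans (pairing_fold f Hf) (eq_sym (pairing_fold f' Hf')))) as E.
  simpl in E. rewrite !pairing_pi2 in E. exact E.
Qed.

Lemma locally_final_endo_id {C : Category} (B : Bifunctor C) {Z : C} (z : hom Z (bob B Z Z))
  (h : hom Z Z) :
  IsLocallyFinal B z -> IsCoalgMor B Z z z h -> h = idm Z.
Proof.
  intros Hz Hh. destruct (Hz Z z) as [u [_ U]].
  rewrite (U h Hh), (U (idm Z)); [reflexivity |].
  unfold IsCoalgMor. rewrite bmap_id. assoc_norm. reflexivity.
Qed.

Section HigherOrderGSOS.
Context {C : Category} (P : BinProducts C) (Q : BinCoproducts C) (B : Bifunctor C)
  (Sigma : Functor C) (FS : FreeAlgebras Sigma).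

Definition GSOSLawType : Type :=
  forall X Y, hom (fob Sigma (bprod P X (bob B X Y))) (bob B X (fa_obj FS (bcoprod Q X Y))).

Definition IsHOGSOSLaw (rho : GSOSLawType) : Prop :=
  (forall X X' Y (f : hom X X'),
     bmap B (idm X) (fstar FS (summap Q f (idm Y))) ∘ rho X Y
       ∘ fmap Sigma (prodmap P (idm X) (bmap B f (idm Y)))
     = bmap B f (idm _) ∘ rho X' Y ∘ fmap Sigma (prodmap P f (idm _))) /\
  (forall X Y Y' (g : hom Y Y'),
     bmap B (idm X) (fstar FS (summap Q (idm X) g)) ∘ rho X Y
     = rho X Y' ∘ fmap Sigma (prodmap P (idm X) (bmap B (idm X) g))).

Definition IsBialgebra (rho : GSOSLawType) {Z : C} (a : hom (fob Sigma Z) Z)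
  (z : hom Z (bob B Z Z)) : Prop :=
  z ∘ a = bmap B (idm Z) (hat FS a ∘ fstar FS (codiag Q Z)) ∘ rho Z Z
            ∘ fmap Sigma (pairing P (idm Z) z).

Variable rho : GSOSLawType.
Hypothesis rho_law : IsHOGSOSLaw rho.
Variables (IA : InitialAlgebra Sigma) (gamma : hom (ia_obj IA) (bob B (ia_obj IA) (ia_obj IA))).
Hypothesis gamma_model : IsOperationalModel P Q B Sigma FS IA rho gamma.
Variables (Z : C) (a : hom (fob Sigma Z) Z) (z : hom Z (bob B Z Z)).
Hypothesis bialg : IsBialgebra rho a z.

Local Notation M := (ia_obj IA).
Local Notation h := (ia_fold IA a).

Lemma fold_alg_mor : h ∘ ia_str IA = a ∘ fmap Sigma h.
Proof. apply ia_fold_mor. Qed.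

Local Notation d := (bmap B (idm M) (hat FS a ∘ fstar FS (copair Q h (idm Z))) ∘ rho M Z).

Lemma fold_gamma_rec :
  bmap B (idm M) h ∘ gamma ∘ ia_str IA
  = d ∘ fmap Sigma (pairing P (idm M) (bmap B (idm M) h ∘ gamma)).
Proof.
  destruct rho_law as [_ rho_natural].
  assert (pairing_eq : pairing P (idm M) (bmap B (idm M) h ∘ gamma)
                       = prodmap P (idm M) (bmap B (idm M) h) ∘ pairing P (idm M) gamma)
    by (rewrite prodmap_pairing, comp_idl; reflexivity).
  assert (copair_eq : h ∘ codiag Q M = copair Q h (idm Z) ∘ summap Q (idm M) h).
  { apply copair_ext; assoc_norm.
    - rw codiag_inl. rw summap_inl. rw copair_inl. reflexivity.
    - rw codiag_inr. rw summap_inr. rw copair_inr. reflexivity. }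
  rewrite pairing_eq, fmap_comp. rwb rho_natural.
  unfold IsOperationalModel in gamma_model. rw gamma_model. repeat rwb bmap_id_comp.
  rw (hat_natural FS _ _ h fold_alg_mor). repeat rwb fstar_comp. rewrite copair_eq.
  reflexivity.
Qed.

Lemma fold_z_rec :
  bmap B h (idm Z) ∘ z ∘ h ∘ ia_str IA
  = d ∘ fmap Sigma (pairing P (idm M) (bmap B h (idm Z) ∘ z ∘ h)).
Proof.
  destruct rho_law as [rho_dinatural _].
  assert (pairing_eq : pairing P (idm M) (bmap B h (idm Z) ∘ z ∘ h)
                       = prodmap P (idm M) (bmap B h (idm Z)) ∘ pairing P (idm M) (z ∘ h))
    by (rewrite prodmap_pairing, comp_idl, comp_assoc; reflexivity).
  assert (copair_eq : copair Q h (idm Z) = codiag Q Z ∘ summap Q h (idm Z)).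
  { apply copair_ext; assoc_norm.
    - rw summap_inl. rw codiag_inl. rw copair_inl. reflexivity.
    - rw summap_inr. rw codiag_inr. rw copair_inr. reflexivity. }
  rewrite pairing_eq, fmap_comp, copair_eq, fstar_comp, !bmap_id_comp.
  rw rho_dinatural. rw fold_alg_mor. rw bialg. rewrite !bmap_id_comp.
  rw bmap_interchange. rw bmap_interchange.
  rwb fmap_comp. rwb fmap_comp. rewrite prodmap_pairing, pairing_comp. assoc_norm.
  reflexivity.
Qed.

Lemma fold_bialgebra_coalg_mor : bmap B (idm M) h ∘ gamma = bmap B h (idm Z) ∘ z ∘ h.
Proof. exact (initial_primrec_unique P IA d _ _ fold_gamma_rec fold_z_rec). Qed.

Lemma bialgebra_adequate (NU : FinalCoalgebra B M) :
  exists k : hom Z (fc_obj NU), k ∘ h = fc_unfold NU gamma.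
Proof.
  exists (fc_unfold NU (bmap B h (idm Z) ∘ z)).
  apply fc_unfold_unique. unfold IsCoalgMor.
  pose proof (fc_unfold_mor _ _ NU Z (bmap B h (idm Z) ∘ z)) as unfold_mor.
  unfold IsCoalgMor in unfold_mor.
  rw unfold_mor. rwb fold_bialgebra_coalg_mor. rewrite bmap_id_comp. assoc_norm.
  reflexivity.
Qed.

End HigherOrderGSOS.

Lemma coproduct_induced_natural {C : Category} {I : Type} (Fs : I -> Functor C) (S T : Functor C)
  (inc : forall i X, hom (fob (Fs i) X) (fob S X))
  (tau : forall i X, hom (fob (Fs i) X) (fob T X)) (m : forall X, hom (fob S X) (fob T X)) :
  IsFunctorCoproduct Fs S inc -> (forall i, IsNatural (Fs i) T (tau i)) ->
  (forall i X, m X ∘ inc i X = tau i X) -> IsNatural S T m.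
Proof.
  intros [inc_natural inc_coproduct] tau_natural m_inc X Y f.
  apply (coproduct_ext (inc_coproduct X)). intro i.
  rw (m_inc i X). rw (tau_natural i X Y f). rw (inc_natural i X Y f). rw (m_inc i Y).
  reflexivity.
Qed.

Section RelativelyFlat.
Context {C : Category} (P : BinProducts C) (Q : BinCoproducts C) (B : Bifunctor C)
  {J : Type} (Sig : J -> Functor C) (Sigma : Functor C) (Siglt : J -> Functor C)
  (FS : FreeAlgebras Sigma) (FSlt : forall j, FreeAlgebras (Siglt j))
  (inj : forall j X, hom (fob (Sig j) X) (fob Sigma X))
  (injlt : forall j X, hom (fob (Siglt j) X) (fob Sigma X)).
Hypothesis inj_natural : forall j, IsNatural (Sig j) Sigma (inj j).
Hypothesis inj_coproduct :
  forall X, IsCoproduct (fun j => fob (Sig j) X) (fob Sigma X) (fun j => inj j X).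
Hypothesis injlt_natural : forall j, IsNatural (Siglt j) Sigma (injlt j).

Local Notation inj_star := (injstar Sigma Siglt FS FSlt injlt).
Local Notation e_j := (e_map Q Sig Sigma Siglt FS FSlt injlt inj).

Lemma injstar_str j W :
  inj_star j W ∘ fa_str (FSlt j) W
  = fa_str FS W ∘ injlt j (fa_obj FS W) ∘ fmap (Siglt j) (inj_star j W).
Proof. apply fa_ext_mor. Qed.

Lemma injstar_eta j W : inj_star j W ∘ fa_eta (FSlt j) W = fa_eta FS W.
Proof. apply fa_ext_eta. Qed.

Lemma injstar_natural j {W W' : C} (f : hom W W') :
  fstar FS f ∘ inj_star j W = inj_star j W' ∘ fstar (FSlt j) f.
Proof.
  apply (free_alg_mor_ext (FSlt j) (fa_str FS W' ∘ injlt j (fa_obj FS W'))); unfold IsAlgMor.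
  - rw injstar_str. rw (fstar_str FS). rw (injlt_natural j _ _ _). rewrite fmap_comp. assoc_norm.
    reflexivity.
  - rw (fstar_str (FSlt j)). rw injstar_str. rewrite fmap_comp. assoc_norm. reflexivity.
  - rw injstar_eta. rw (fstar_eta FS). rw (fstar_eta (FSlt j)). rw injstar_eta. reflexivity.
Qed.

Lemma hat_injstar j {A : C} (a : hom (fob Sigma A) A) :
  hat FS a ∘ inj_star j A = hat (FSlt j) (a ∘ injlt j A).
Proof.
  apply (free_alg_mor_ext (FSlt j) (a ∘ injlt j A)); unfold IsAlgMor.
  - rw injstar_str. rw hat_str. rw (injlt_natural j _ _ _). rewrite fmap_comp. assoc_norm. reflexivity.
  - apply hat_str.
  - rw injstar_eta. rw hat_eta. rw hat_eta. reflexivity.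
Qed.

Lemma e_map_natural j {W W' : C} (f : hom W W') :
  fstar FS f ∘ e_j j W = e_j j W' ∘ Sj_map Q Sig Siglt FSlt j f.
Proof.
  apply copair_ext; unfold e_map, Sj_map, Sj; assoc_norm.
  - rw copair_inl. rw summap_inl. rw copair_inl. apply injstar_natural.
  - rw copair_inr. rw summap_inr. rw copair_inr. rw (fstar_str FS). rw (inj_natural j _ _ _).
    rewrite <- !fmap_comp, injstar_natural. reflexivity.
Qed.

Lemma induced_law_HOGSOS (rhoj : RhojType P Q B Sig Siglt FSlt) (rho : GSOSLawType P Q B Sigma FS) :
  IsRelFlatLaw P Q B Sig Siglt FSlt rhoj ->
  IsInducedLaw P Q B Sig Sigma Siglt FS FSlt injlt inj rhoj rho ->
  IsHOGSOSLaw P Q B Sigma FS rho.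
Proof.
  intros [rhoj_dinatural rhoj_natural] rho_inj. split.
  - intros X X' Y f. apply (coproduct_ext (inj_coproduct _)). intro j.
    rw (inj_natural j _ _ _). rw (rho_inj j _ _). rwb bmap_id_comp. rewrite e_map_natural. rw bmap_id_comp.
    rw rhoj_dinatural. rw (inj_natural j _ _ _). rw (rho_inj j _ _). rw bmap_interchange. reflexivity.
  - intros X Y Y' g. apply (coproduct_ext (inj_coproduct _)). intro j.
    rw (rho_inj j _ _). rwb bmap_id_comp. rewrite e_map_natural. rw bmap_id_comp. rw rhoj_natural.
    rw (inj_natural j _ _ _). rw (rho_inj j _ _). reflexivity.
Qed.

Variables (rhoj : RhojType P Q B Sig Siglt FSlt) (Z : C) (z : hom Z (bob B Z Z)).

Lemma aj_coalg_inl j (alt : hom (fob (Siglt j) Z) Z) :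
  aj_coalg P Q B Sig Siglt FSlt rhoj z j alt ∘ cinl Q = bmap B (idm Z) (cinl Q) ∘ z.
Proof.
  unfold aj_coalg. assoc_norm.
  do 4 rw summap_inl. rw codiag_inl. reflexivity.
Qed.

Lemma aj_coalg_inr j (alt : hom (fob (Siglt j) Z) Z) :
  aj_coalg P Q B Sig Siglt FSlt rhoj z j alt ∘ cinr Q
  = bmap B (idm Z) (summap Q (hat (FSlt j) alt) (fmap (Sig j) (hat (FSlt j) alt)))
    ∘ bmap B (idm Z) (Sj_map Q Sig Siglt FSlt j (codiag Q Z)) ∘ rhoj j Z Z
    ∘ fmap (Sig j) (pairing P (idm Z) z).
Proof.
  unfold aj_coalg. assoc_norm.
  do 4 rw summap_inr. rw codiag_inr. reflexivity.
Qed.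

Hypothesis z_locally_final : IsLocallyFinal B z.
Variables (aj : forall j, hom (bcoprod Q Z (fob (Sig j) Z)) Z) (arho : hom (fob Sigma Z) Z).
Hypothesis aj_coalg_mor : forall j,
  IsCoalgMor B Z (aj_coalg P Q B Sig Siglt FSlt rhoj z j (arho ∘ injlt j Z)) z (aj j).
Hypothesis arho_inj : forall j, arho ∘ inj j Z = aj j ∘ cinr Q.

Lemma aj_inl j : aj j ∘ cinl Q = idm Z.
Proof.
  apply (locally_final_endo_id B z _ z_locally_final). unfold IsCoalgMor.
  rw (aj_coalg_mor j). rw aj_coalg_inl. rwb bmap_id_comp. reflexivity.
Qed.

Lemma aj_summap_hat j :
  aj j ∘ summap Q (hat (FSlt j) (arho ∘ injlt j Z)) (fmap (Sig j) (hat (FSlt j) (arho ∘ injlt j Z)))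
  = hat FS arho ∘ e_j j Z.
Proof.
  apply copair_ext; unfold e_map, Sj; assoc_norm.
  - rw summap_inl. rw aj_inl. rw copair_inl. rewrite hat_injstar. reflexivity.
  - rw summap_inr. rw copair_inr. rw hat_str. rw (inj_natural j _ _ _). rw arho_inj.
    rewrite <- fmap_comp, hat_injstar. reflexivity.
Qed.

Lemma arho_bialgebra (rho : GSOSLawType P Q B Sigma FS) :
  IsInducedLaw P Q B Sig Sigma Siglt FS FSlt injlt inj rhoj rho ->
  IsBialgebra P Q B Sigma FS rho arho z.
Proof.
  intro rho_inj. apply (coproduct_ext (inj_coproduct _)). intro j.
  rw arho_inj. rw (aj_coalg_mor j). rw aj_coalg_inr. rw (inj_natural j _ _ _).
  rw (rho_inj j _ _). repeat rwb bmap_id_comp. rw aj_summap_hat. rw e_map_natural.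
  reflexivity.
Qed.

End RelativelyFlat.

Theorem corollary3p12
  (C : Category) (P : BinProducts C) (Q : BinCoproducts C) (B : Bifunctor C)
  (* (J,<) well-founded *)
  (J : Type) (lt : J -> J -> Prop) (Hwf : well_founded lt)
  (* Sigma = coprod_j Sigma_j *)
  (Sig : J -> Functor C) (Sigma : Functor C)
  (inj : forall j X, hom (fob (Sig j) X) (fob Sigma X))
  (Hcop : IsFunctorCoproduct Sig Sigma inj)
  (* Sigma_{<j} = coprod_{i<j} Sigma_i, and inj_{<j} : Sigma_{<j} -> Sigma induced *)
  (Siglt : J -> Functor C)
  (inclt : forall j (p : {i : J | lt i j}) X, hom (fob (Sig (proj1_sig p)) X) (fob (Siglt j) X))
  (Hcoplt : forall j, IsFunctorCoproduct (fun p : {i : J | lt i j} => Sig (proj1_sig p)) (Siglt j) (inclt j))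
  (injlt : forall j X, hom (fob (Siglt j) X) (fob Sigma X))
  (Hinjlt : forall j (p : {i : J | lt i j}) X, injlt j X ∘ inclt j p X = inj (proj1_sig p) X)
  (* free algebras, initial algebra, final coalgebras *)
  (FS : FreeAlgebras Sigma) (FSj : forall j, FreeAlgebras (Sig j))
  (FSlt : forall j, FreeAlgebras (Siglt j))
  (IA : InitialAlgebra Sigma)
  (NU : forall X : C, FinalCoalgebra B X)
  (* the relatively flat law and the induced law rho *)
  (rhoj : RhojType P Q B Sig Siglt FSlt) (Hrhoj : IsRelFlatLaw P Q B Sig Siglt FSlt rhoj)
  (rho : forall X Y, hom (fob Sigma (bprod P X (bob B X Y))) (bob B X (fa_obj FS (bcoprod Q X Y))))
  (Hrho : IsInducedLaw P Q B Sig Sigma Siglt FS FSlt injlt inj rhoj rho)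
  (* its operational model *)
  (gamma : hom (ia_obj IA) (bob B (ia_obj IA) (ia_obj IA)))
  (Hgamma : IsOperationalModel P Q B Sigma FS IA rho gamma)
  (* a locally final coalgebra *)
  (Z : C) (z : hom Z (bob B Z Z)) (Hz : IsLocallyFinal B z)
  (* the construction of a_rho: a^j_rho, a^{<j}_rho and a_rho *)
  (aj : forall j, hom (bcoprod Q Z (fob (Sig j) Z)) Z)
  (alt : forall j, hom (fob (Siglt j) Z) Z)
  (arho : hom (fob Sigma Z) Z)
  (Halt : forall j (p : {i : J | lt i j}), alt j ∘ inclt j p Z = aj (proj1_sig p) ∘ cinr Q)
  (Haj : forall j, IsCoalgMor B Z (aj_coalg P Q B Sig Siglt FSlt rhoj z j (alt j)) z (aj j))
  (Harho : forall j, arho ∘ inj j Z = aj j ∘ cinr Q) :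
  (* adequacy: k . [[-]] = beh *)
  exists k : hom Z (fc_obj (NU (ia_obj IA))),
    k ∘ ia_fold IA arho = fc_unfold (NU (ia_obj IA)) gamma.
Proof.
  destruct Hcop as [inj_natural inj_coproduct].
  assert (injlt_natural : forall j, IsNatural (Siglt j) Sigma (injlt j)).
  { intro j. exact (coproduct_induced_natural _ _ _ _ _ _ (Hcoplt j)
                      (fun p => inj_natural (proj1_sig p)) (Hinjlt j)). }
  assert (alt_eq : forall j, alt j = arho ∘ injlt j Z).
  { intro j. apply (coproduct_ext (proj2 (Hcoplt j) Z)). intro p.
    rw Halt. rw (Hinjlt j p Z). rw Harho. reflexivity. }
  assert (aj_coalg_mor : forall j,
            IsCoalgMor B Z (aj_coalg P Q B Sig Siglt FSlt rhoj z j (arho ∘ injlt j Z)) z (aj j)).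
  { intro j. rewrite <- alt_eq. exact (Haj j). }
  pose proof (induced_law_HOGSOS P Q B Sig Sigma Siglt FS FSlt inj injlt
                inj_natural inj_coproduct injlt_natural rhoj rho Hrhoj Hrho) as rho_law.
  pose proof (arho_bialgebra P Q B Sig Sigma Siglt FS FSlt inj injlt inj_natural inj_coproduct
                injlt_natural rhoj Z z Hz aj arho aj_coalg_mor Harho rho Hrho) as bialg.
  exact (bialgebra_adequate P Q B Sigma FS rho rho_law IA gamma Hgamma Z arho z bialg
           (NU (ia_obj IA))).
Qed.
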